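(* Let $\{\Theta_i\subset\mathbb{R}^r\}_{i=1}^K$ be a set of $K$ parameter spaces ($K>1$), $d_i$ the VC dimension of $\Theta_i$, and $\Theta=\bigcup_{i=1}^K\Theta_i$ with VC dimension $d$. Let $T$ and $S$ be samples of size $N$ from distributions $\mathbb{T}$ and $\mathbb{S}$, respectively, and let $\hat{\mathrm{Div}}(T,S)$ be the empirical $\mathcal{H}$-divergence between the samples. Then in the parameter space $\Theta$, for any $\delta\in(0,1)$, with probability at least $1-\delta$, \[ \mathrm{Div}(\mathbb{T},\mathbb{S})\le\hat{\mathrm{Div}}(T,S)+\max_{i\in[1,K]}4\sqrt{\frac{d_i\ln(2N)+\ln(2K/\delta)}{2N}}. \]
   Context: The hypotheses $h:\mathcal{X}\to\{0,1\}$ are the prediction functions parameterized by the parameter space; $I(h)=\{x:h(x)=1\}$. The $\mathcal{H}$-divergence is $\mathrm{Div}(\mathbb{T},\mathbb{S})=2\sup_{h}|\mathcal{P}_{\mathbb{T}}(I(h))-\mathcal{P}_{\mathbb{S}}(I(h))|$, and the empirical $\mathcal{H}$-divergence $\hat{\mathrm{Div}}(T,S)$ is the same quantity with $\mathcal{P}_{\mathbb{T}},\mathcal{P}_{\mathbb{S}}$ replaced by the empirical distributions of the samples $T,S$. *)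

From HB Require Import structures.
From mathcomp Require Import all_boot all_order all_algebra.
From mathcomp Require Import all_classical all_reals all_analysis.
Set Implicit Arguments. Unset Strict Implicit. Unset Printing Implicit Defensive.
Import Order.TTheory GRing.Theory Num.Theory.
Import numFieldNormedType.Exports.
Local Open Scope classical_set_scope.
Local Open Scope ring_scope.

Definition shatters {X : eqType} (H : set (X -> bool)) (s : seq X) : Prop :=
  forall f : X -> bool, exists2 h, H h & forall x, x \in s -> h x = f x.

Definition is_VCdim {X : eqType} (H : set (X -> bool)) (d : nat) : Prop :=
  (exists s : seq X, [/\ uniq s, size s = d & shatters H s]) /\
  (forall s : seq X, uniq s -> shatters H s -> (size s <= d)%N).

Definition hclass {R : realType} {r : nat} {X : Type}
  (hp : 'rV[R]_r -> X -> bool) (Th : set 'rV[R]_r) : set (X -> bool) :=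
  hp @` Th.

Definition Iset {X : Type} (h : X -> bool) : set X := [set x | h x].

Definition Hdiv {R : realType} {d : measure_display} {X : measurableType d}
  (PT PS : probability X R) (H : set (X -> bool)) : R :=
  2 * sup [set `|fine (PT (Iset h)) - fine (PS (Iset h))| | h in H].

Definition emp_prob {R : realType} {X : Type} {N : nat}
  (xs : 'I_N -> X) (h : X -> bool) : R :=
  (\sum_(j < N) (h (xs j))%:R) / N%:R.

Definition emp_Hdiv {R : realType} {X : Type} {N : nat}
  (ts ss : 'I_N -> X) (H : set (X -> bool)) : R :=
  2 * sup [set `|emp_prob ts h - emp_prob ss h : R| | h in H].

(* Xs_1..Xs_N, Ys_1..Ys_N are mutually independent random variables on
   (Omega, P), each Xs_j with law PT and each Ys_j with law PS. *)
Definition iid_samples {R : realType} {dO dX : measure_display}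
  {Omega : measurableType dO} {X : measurableType dX} {N : nat}
  (P : probability Omega R) (Xs Ys : 'I_N -> Omega -> X)
  (PT PS : probability X R) : Prop :=
  [/\ (forall j, measurable_fun setT (Xs j)),
      (forall j, measurable_fun setT (Ys j)) &
      forall A B : 'I_N -> set X,
        (forall j, measurable (A j)) -> (forall j, measurable (B j)) ->
        P ((\bigcap_(j in [set: 'I_N]) (Xs j @^-1` A j)) `&`
           (\bigcap_(j in [set: 'I_N]) (Ys j @^-1` B j))) =
        ((\prod_(j < N) fine (PT (A j))) * (\prod_(j < N) fine (PS (B j))))%:E].

From HB Require Import structures.
From mathcomp Require Import all_boot all_order all_algebra.
From mathcomp Require Import all_classical all_reals all_analysis.
From mathcomp Require Import ring lra zify.
Import Order.TTheory GRing.Theory Num.Theory.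
Import numFieldNormedType.Exports.
Local Open Scope classical_set_scope.
Local Open Scope ring_scope.

(* Only the direction Div <= emp Div + eps is claimed, and it needs no uniform
   convergence: fix h0 whose true discrepancy |P_T(I h0) - P_S(I h0)| is within
   eta of the supremum.  The 2N sample indicators of h0 are independent
   Bernoulli variables, so Hoeffding's lemma (through cosh u <= exp (u^2/2)) and a
   Chernoff bound on the finite product space show that, with probability at
   least 1 - delta, the empirical discrepancy of h0, hence half the empirical
   divergence, is at least the true one minus a = sqrt (2 ln (1/delta) / N).
   As 2a is strictly below the stated bound, eta can fill the gap.  The VC
   hypotheses serve only to make the hypothesis class nonempty. *)

Lemma fact_double_ge (n : nat) : (2 ^ n * n`! <= (2 * n)`!)%N.
Proof.
elim: n => [//|n IHn].
have -> : (2 * n.+1 = (2 * n).+2)%N by lia.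
rewrite !factS expnS; nia.
Qed.

Section Hoeffding.
Context {R : realType}.

Lemma expR_add_expRN_le (u : R) : expR u + expR (- u) <= 2 * expR (u ^+ 2 / 2).
Proof.
have u2_ge0 : 0 <= u ^+ 2 := sqr_ge0 u.
pose c k := u ^+ k / k`!%:R + (- u) ^+ k / k`!%:R.
have c_even m : c (2 * m)%N = 2 * ((u ^+ 2) ^+ m / (2 * m)`!%:R).
  by rewrite /c !exprM sqrrN; ring.
have c_odd m : c (2 * m).+1 = 0.
  by rewrite /c exprS [(- u) ^+ _]exprS !exprM sqrrN; ring.
have c_ge0 k : 0 <= c k.
  rewrite -(odd_double_half k) -muln2 mulnC; case: (odd k).
    by rewrite add1n c_odd.
  by rewrite add0n c_even; apply/mulr_ge0/divr_ge0/ler0n/exprn_ge0.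
(* Odd terms vanish and (2m)! >= 2^m m!, so the even terms are dominated
   termwise by those of 2 expR (u^2/2). *)
have c_le n : \sum_(0 <= k < 2 * n) c k <= 2 * series (exp_coeff (u ^+ 2 / 2)) n.
  elim: n => [|n IHn]; first by rewrite muln0 /series /= !big_geq.
  have -> : (2 * n.+1 = (2 * n).+2)%N by lia.
  rewrite /series /= !big_nat_recr //= c_odd addr0 c_even mulrDr lerD //.
  rewrite ler_pM2l // /exp_coeff /= expr_div_n -mulrA -invfM.
  rewrite (ler_wpM2l (exprn_ge0 _ u2_ge0)) //.
  rewrite lef_pV2 ?posrE ?mulr_gt0 ?exprn_gt0 ?ltr0n ?fact_gt0 //.
  by rewrite -natrX -natrM ler_nat fact_double_ge.
have c_mono n : \sum_(0 <= k < n) c k <= \sum_(0 <= k < 2 * n) c k.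
  rewrite [leRHS](big_cat_nat (leq0n n)) /=; last by lia.
  by rewrite lerDl sumr_ge0.
have cvg_exp (x : R) : cvgn (series (exp_coeff x)) := is_cvg_series_exp_coeff x.
rewrite /expR -limD //.
have -> : 2 * limn (series (exp_coeff (u ^+ 2 / 2))) =
          limn (2 *: series (exp_coeff (u ^+ 2 / 2))) by rewrite limZl_tmp.
apply: ler_lim; [exact: is_cvgD|exact: is_cvgZr|].
near=> n; rewrite /series /= !fctE -big_split /=.
exact: le_trans (c_mono n) (c_le n).
Unshelve. all: end_near.
Qed.

Definition bern_pmf (p : R) (b : bool) : R := if b then p else 1 - p.

Lemma bern_pmf_ge0 (p : R) (b : bool) : 0 <= p <= 1 -> 0 <= bern_pmf p b.
Proof. by case/andP=> p_ge0 p_le1; case: b; rewrite /= ?subr_ge0. Qed.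

Lemma bernoulli_mgf_le (p s : R) : 0 <= p <= 1 ->
  \sum_(b : bool) bern_pmf p b * expR (s * (b%:R - p)) <= expR (s ^+ 2 / 4).
Proof.
move=> /andP[p_ge0 p_le1]; rewrite big_bool /= sub0r mulrN.
set E := expR (- (s * p)); set C := (expR s + expR (- s)) / 2.
have E_gt0 : 0 < E := expR_gt0 _.
have tangent x : E * (1 + (x + s * p)) <= expR x.
  have -> : expR x = E * expR (x + s * p) by rewrite /E -expRD; congr expR; ring.
  by rewrite ler_wpM2l ?(ltW E_gt0) ?expR_ge1Dx.
(* Convexity of expR between 0 and -s, via its tangent line at -sp. *)
have E_le : E <= (1 - p) + p * expR (- s).
  have := tangent 0; have := tangent (- s); rewrite expR0; nra.
have C_ge1 : 1 <= C.
  by rewrite /C; have := expR_ge1Dx s; have := expR_ge1Dx (- s); lra.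
have expRsN : expR s * expR (- s) = 1 by rewrite -expRD subrr expR0.
have -> : p * expR (s * (1 - p)) + (1 - p) * expR (- (s * p)) =
          E * (p * expR s + (1 - p)).
  by rewrite mulrBr mulr1 expRD -/E; ring.
have prod_le : ((1 - p) + p * expR (- s)) * (p * expR s + (1 - p)) <= (1 + C) / 2.
  have -> : ((1 - p) + p * expR (- s)) * (p * expR s + (1 - p)) =
            1 + 2 * p * (1 - p) * (C - 1).
    by rewrite /C; transitivity ((1 - p) ^+ 2 + p ^+ 2 * (expR s * expR (- s)) +
                   p * (1 - p) * (expR s + expR (- s))); [ring|rewrite expRsN; field].
  have : 0 <= (C - 1) * (2 * p - 1) ^+ 2 by rewrite mulr_ge0 ?sqr_ge0 ?subr_ge0.
  nra.
apply: le_trans (ler_wpM2r _ E_le) _.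
  by rewrite addr_ge0 ?mulr_ge0 ?subr_ge0 ?expR_ge0.
apply: le_trans prod_le _.
set v := expR (s / 2); set w := expR (- (s / 2)).
have -> : (1 + C) / 2 = ((v + w) / 2) ^+ 2.
  have vv : expR s = v * v by rewrite -expRD -splitr.
  have ww : expR (- s) = w * w by rewrite -expRD -opprD -splitr.
  have vw : v * w = 1 by rewrite -expRD subrr expR0.
  by rewrite /C vv ww expr_div_n sqrrD vw; field.
have -> : expR (s ^+ 2 / 4) = expR ((s / 2) ^+ 2 / 2) ^+ 2.
  by rewrite -expRM_natr; congr expR; field.
rewrite ler_sqr ?nnegrE ?expR_ge0 ?divr_ge0 ?addr_ge0 ?expR_ge0 //.
by rewrite ler_pdivrMr // mulrC expR_add_expRN_le.
Qed.

Lemma bern_pair_mgf_le (p q s : R) : 0 <= p <= 1 -> 0 <= q <= 1 ->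
  \sum_(z : bool * bool)
     bern_pmf p z.1 * bern_pmf q z.2 * expR (s * ((z.1%:R - p) - (z.2%:R - q)))
  <= expR (s ^+ 2 / 2).
Proof.
move=> p01 q01.
under eq_bigr => z _.
  rewrite (_ : _ * _ * _ = (bern_pmf p z.1 * expR (s * (z.1%:R - p))) *
                           (bern_pmf q z.2 * expR (- s * (z.2%:R - q)))); last first.
    by rewrite mulrACA -expRD; congr (_ * expR _); ring.
  over.
rewrite -(pair_bigA _ (fun x y => (bern_pmf p x * expR (s * (x%:R - p))) *
                                 (bern_pmf q y * expR (- s * (y%:R - q))))) /=.
rewrite -big_distrlr /= (_ : s ^+ 2 / 2 = s ^+ 2 / 4 + (- s) ^+ 2 / 4); last first.
  by rewrite sqrrN; field.
rewrite expRD ler_pM ?bernoulli_mgf_le ?sumr_ge0 // => b _;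
  by rewrite mulr_ge0 ?expR_ge0 ?bern_pmf_ge0.
Qed.

Section PairedSample.
Context {N : nat}.
Implicit Types f : {ffun 'I_N -> bool * bool}.

Definition pair_weight (p q : R) f : R :=
  \prod_(j < N) (bern_pmf p (f j).1 * bern_pmf q (f j).2).

Definition pair_dev (p q : R) f : R :=
  \sum_(j < N) (((f j).1%:R - p) - ((f j).2%:R - q)).

Lemma pair_chernoff (p q a sg : R) :
  0 <= p <= 1 -> 0 <= q <= 1 -> sg ^+ 2 = 1 -> 0 <= a ->
  \sum_(f | sg * pair_dev p q f <= - (N%:R * a)) pair_weight p q f
  <= expR (- (N%:R * a ^+ 2 / 2)).
Proof.
move=> p01 q01 sg2 a_ge0; set s := - (a * sg).
pose F (z : bool * bool) : R :=
  bern_pmf p z.1 * bern_pmf q z.2 * expR (s * ((z.1%:R - p) - (z.2%:R - q))).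
have F_ge0 z : 0 <= F z by rewrite !mulr_ge0 ?expR_ge0 ?bern_pmf_ge0.
have prodF f : \prod_(j < N) F (f j) = pair_weight p q f * expR (s * pair_dev p q f).
  by rewrite big_split /= -expR_sum mulr_sumr.
have markov f : sg * pair_dev p q f <= - (N%:R * a) ->
    pair_weight p q f <= expR (- (N%:R * a ^+ 2)) * \prod_(j < N) F (f j).
  have w_ge0 : 0 <= pair_weight p q f.
    by rewrite prodr_ge0 // => j _; rewrite mulr_ge0 ?bern_pmf_ge0.
  move=> bad; rewrite prodF mulrCA -expRD -[leLHS]mulr1 ler_wpM2l //.
  apply: le_trans (expR_ge1Dx _); rewrite lerDl /s.
  have : 0 <= a * (- (N%:R * a) - sg * pair_dev p q f) by rewrite mulr_ge0 ?subr_ge0.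
  by rewrite expr2; lra.
apply: le_trans (_ : \sum_(f : {ffun 'I_N -> bool * bool})
                      expR (- (N%:R * a ^+ 2)) * \prod_(j < N) F (f j) <= _).
  rewrite big_mkcond /=; apply: ler_sum => f _; case: ifP => [/markov //|_].
  by rewrite mulr_ge0 ?expR_ge0 ?prodr_ge0.
rewrite -mulr_sumr -(bigA_distr_bigA (fun (j : 'I_N) (z : bool * bool) => F z)) /=.
have sumF : \sum_(z : bool * bool) F z <= expR (a ^+ 2 / 2).
  have -> : a ^+ 2 = s ^+ 2 by rewrite /s sqrrN exprMn sg2 mulr1.
  exact: bern_pair_mgf_le.
apply: le_trans (ler_wpM2l (expR_ge0 _) (_ : _ <= expR (a ^+ 2 / 2) ^+ N)) _.
  rewrite -[in leRHS](card_ord N) -prodr_const ler_prod // => j _.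
  by rewrite sumr_ge0 ?sumF.
by rewrite -expRM_natl -expRD ler_expR; lra.
Qed.

End PairedSample.

End Hoeffding.

Section ProbabilityFacts.
Variables (R : realType) (d : measure_display) (X : measurableType d).
Variable Q : probability X R.

Lemma fine_probability_ge0_le1 (A : set X) : measurable A -> 0 <= fine (Q A) <= 1.
Proof.
move=> mA; rewrite fine_ge0 ?measure_ge0 //= -lee_fin fineK ?fin_num_measure //.
exact: probability_le1.
Qed.

Lemma fine_probability_setC (A : set X) :
  measurable A -> fine (Q (~` A)) = 1 - fine (Q A).
Proof.
by move=> mA; rewrite probability_setC // -[in LHS](fineK (fin_num_measure Q A mA)).
Qed.

End ProbabilityFacts.

Lemma emp_prob_ge0_le1 (R : realType) (X : Type) (N : nat) (xs : 'I_N -> X)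
  (h : X -> bool) : (0 < N)%N -> 0 <= (emp_prob xs h : R) <= 1.
Proof.
move=> N_gt0; rewrite /emp_prob divr_ge0 ?sumr_ge0 //= ler_pdivrMr ?ltr0n // mul1r.
by rewrite -[in leRHS](card_ord N) -sumr_const ler_sum // => j _; case: (h (xs j)).
Qed.

Section SingleHypothesis.
Context {R : realType} {dO dX : measure_display}.
Context {Omega : measurableType dO} {X : measurableType dX} {N : nat}.
Context {P : probability Omega R} {Ts Ss : 'I_N -> Omega -> X}.
Context {PT PS : probability X R}.
Hypothesis iid : iid_samples P Ts Ss PT PS.
Context {h : X -> bool}.
Hypothesis mh : measurable (Iset h).

Let p := fine (PT (Iset h)).
Let q := fine (PS (Iset h)).

Definition sample_outcome (w : Omega) : {ffun 'I_N -> bool * bool} :=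
  [ffun j => (h (Ts j w), h (Ss j w))].

Lemma level_set_false : [set x | h x = false] = ~` Iset h.
Proof.
by apply/seteqP; split => x /=; [move=> hx; rewrite /Iset /= hx | move/negP/negbTE].
Qed.

Lemma measurable_level_set (b : bool) : measurable [set x | h x = b].
Proof. by case: b; [exact: mh | rewrite level_set_false; exact: measurableC]. Qed.

Lemma fine_probability_level_set (Q : probability X R) (b : bool) :
  fine (Q [set x | h x = b]) = bern_pmf (fine (Q (Iset h))) b.
Proof. by case: b => //=; rewrite level_set_false fine_probability_setC. Qed.

Lemma outcome_fiberE (f : {ffun 'I_N -> bool * bool}) :
  [set w | sample_outcome w = f] =
  \bigcap_(j in [set: 'I_N]) (Ts j @^-1` [set x | h x = (f j).1]) `&`
  \bigcap_(j in [set: 'I_N]) (Ss j @^-1` [set x | h x = (f j).2]).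
Proof.
apply/seteqP; split => w /=.
  by move=> <-; split => j _; rewrite /= ffunE.
move=> [hT hS]; apply/ffunP => j; rewrite ffunE.
by rewrite (hT j I) (hS j I); case: (f j).
Qed.

Lemma measurable_outcome_fiber (f : {ffun 'I_N -> bool * bool}) :
  measurable [set w | sample_outcome w = f].
Proof.
case: iid => mTs mSs _; rewrite outcome_fiberE.
apply: measurableI; apply: fin_bigcap_measurable => // j _;
  rewrite -[A in measurable A]setTI.
- exact/mTs/measurable_level_set.
- exact/mSs/measurable_level_set.
Qed.

Lemma probability_outcome_fiber (f : {ffun 'I_N -> bool * bool}) :
  P [set w | sample_outcome w = f] = (pair_weight p q f)%:E.
Proof.
case: iid => _ _ indep; rewrite outcome_fiberE indep; last 2 first.
- by move=> j; exact: measurable_level_set.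
- by move=> j; exact: measurable_level_set.
rewrite /pair_weight big_split /=.
by under eq_bigr do rewrite fine_probability_level_set;
   under [Y in _ * Y]eq_bigr do rewrite fine_probability_level_set.
Qed.

Lemma pair_dev_sample_outcome (w : Omega) : (0 < N)%N ->
  pair_dev p q (sample_outcome w) =
  N%:R * ((emp_prob (Ts^~ w) h - emp_prob (Ss^~ w) h) - (p - q)).
Proof.
move=> N_gt0; have N_neq0 : N%:R != 0 :> R by rewrite pnatr_eq0 -lt0n.
rewrite /pair_dev /emp_prob; under eq_bigr do rewrite ffunE /=.
rewrite !sumrB !sumr_const card_ord -[p *+ N]mulr_natl -[q *+ N]mulr_natl.
by field.
Qed.

Lemma emp_discrepancy_concentration (a : R) : (0 < N)%N -> 0 <= a ->
  exists2 E : set Omega, measurable E &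
    E `<=` [set w | `|p - q| - a < `|emp_prob (Ts^~ w) h - emp_prob (Ss^~ w) h|]
    /\ ((1 - expR (- (N%:R * a ^+ 2 / 2)))%:E <= P E)%E.
Proof.
move=> N_gt0 a_ge0.
pose sg : R := if q <= p then 1 else -1.
have sg2 : sg ^+ 2 = 1 by rewrite /sg; case: ifP; rewrite ?sqrrN expr1n.
have sg_pq : sg * (p - q) = `|p - q|.
  rewrite /sg; case: ifPn => [qp|]; first by rewrite mul1r ger0_norm ?subr_ge0.
  by rewrite -ltNge mulN1r => pq; rewrite ltr0_norm ?subr_lt0.
have sg_le x : sg * x <= `|x|.
  by rewrite /sg; case: ifP; rewrite ?mul1r ?mulN1r ?ler_norm // -normrN ler_norm.
pose bad := [pred f : {ffun 'I_N -> bool * bool} | sg * pair_dev p q f <= - (N%:R * a)].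
pose B := \bigcup_(f in [set` bad]) [set w | sample_outcome w = f].
have mB : measurable B.
  by apply: fin_bigcup_measurable => // f _; exact: measurable_outcome_fiber.
exists (~` B); first exact: measurableC.
split.
  move=> w Bw /=; have : ~~ bad (sample_outcome w).
    by apply/negP => bad_w; apply: Bw; exists (sample_outcome w).
  rewrite inE -ltNge pair_dev_sample_outcome // mulrCA -mulrN ltr_pM2l ?ltr0n //.
  have := sg_le (emp_prob (Ts^~ w) h - emp_prob (Ss^~ w) h).
  rewrite [in X in _ -> X -> _]mulrBr sg_pq; lra.
have PB : (P B <= (expR (- (N%:R * a ^+ 2 / 2)))%:E)%E.
  apply: le_trans (content_sub_fsum _ _ _ mB (@subset_refl _ B)) _ => //.
    by move=> f _; exact: measurable_outcome_fiber.
  rewrite -(@bigfs _ _ _ _ (index_enum _)) ?index_enum_uniq //; last first.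
    by move=> f _; rewrite mem_index_enum.
  rewrite (eq_bigr (fun f => (pair_weight p q f)%:E)); last first.
    by move=> f _; exact: probability_outcome_fiber.
  by rewrite sumEFin lee_fin pair_chernoff ?fine_probability_ge0_le1.
move: PB; rewrite probability_setC // -[P B](fineK (fin_num_measure P B mB)).
by rewrite -EFinB !lee_fin; lra.
Qed.

End SingleHypothesis.

Section Radius.
Context {R : realType}.

Definition hoeffding_radius (N : nat) (delta : R) : R :=
  Num.sqrt (2 * ln delta^-1 / N%:R).

Lemma hoeffding_radius_ge0 N delta : 0 <= hoeffding_radius N delta.
Proof. exact: sqrtr_ge0. Qed.

Lemma expR_hoeffding_radius (N : nat) (delta : R) : (0 < N)%N -> 0 < delta <= 1 ->
  expR (- (N%:R * hoeffding_radius N delta ^+ 2 / 2)) = delta.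
Proof.
move=> N_gt0 /andP[delta_gt0 delta_le1].
have N_gt0' : 0 < N%:R :> R by rewrite ltr0n.
have lninv_ge0 : 0 <= ln delta^-1 by rewrite ln_ge0 // invf_ge1.
rewrite sqr_sqrtr ?divr_ge0 ?mulr_ge0 ?ler0n //.
rewrite (_ : _ / 2 = ln delta^-1); last by field; rewrite gt_eqF.
by rewrite expRN lnK ?invrK // posrE invr_gt0.
Qed.

Lemma hoeffding_radius_lt_bound (K N : nat) (dims : 'I_K -> nat) (delta : R) :
  (0 < K)%N -> (0 < N)%N -> 0 < delta < 1 ->
  2 * hoeffding_radius N delta <
  \big[Num.max/0]_(i < K)
    (4 * Num.sqrt (((dims i)%:R * ln (2 * N%:R) + ln (2 * K%:R / delta)) / (2 * N%:R))).
Proof.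
move=> K_gt0 N_gt0 /andP[delta_gt0 delta_lt1].
have N_ge1 : 1 <= N%:R :> R by rewrite ler1n.
have K_ge1 : 1 <= K%:R :> R by rewrite ler1n.
set L := ln (2 * K%:R / delta).
have ln_lt_L : ln delta^-1 < L.
  rewrite /L mulrC lnM ?posrE ?invr_gt0 ?mulr_gt0 ?ltr0n // ltrDl ln_gt0 //; lra.
have lninv_ge0 : 0 <= ln delta^-1 by rewrite ln_ge0 // invf_ge1 ?ltW.
have lnN_ge0 : 0 <= ln (2 * N%:R) :> R by rewrite ln_ge0 //; lra.
have N2_gt0 : 0 < 2 * N%:R :> R by lra.
apply: lt_le_trans (le_bigmax _ _ (Ordinal K_gt0)).
apply: lt_le_trans (_ : 4 * Num.sqrt (L / (2 * N%:R)) <= _); last first.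
  rewrite ler_pM2l // ler_sqrt; last by rewrite divr_ge0 ?addr_ge0 ?mulr_ge0 //; lra.
  by rewrite ler_pM2r ?invr_gt0 // lerDr mulr_ge0.
rewrite /hoeffding_radius -ltr_sqr ?nnegrE ?mulr_ge0 ?sqrtr_ge0 //.
rewrite !exprMn !sqr_sqrtr ?divr_ge0 ?mulr_ge0 //; try lra.
rewrite (_ : 4 ^+ 2 * (L / (2 * N%:R)) = 2 ^+ 2 * (2 * L / N%:R)); last by field; lra.
by rewrite ltr_pM2l // ltr_pM2r ?invr_gt0 ?ltr0n //; lra.
Qed.

End Radius.

Lemma is_VCdim_neq0 (X : eqType) (H : set (X -> bool)) (d : nat) :
  is_VCdim H d -> H !=set0.
Proof. by case=> [[s [_ _ /(_ xpredT) [h Hh _]]] _]; exists h. Qed.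

Lemma has_sup_dist01 (R : realType) (T : Type) (H : set T) (f g : T -> R) :
  H !=set0 -> (forall h, H h -> 0 <= f h <= 1) -> (forall h, H h -> 0 <= g h <= 1) ->
  has_sup [set `|f h - g h| | h in H].
Proof.
move=> [h0 Hh0] f01 g01; split; first by exists `|f h0 - g h0|, h0.
exists 1 => _ [h Hh <-]; move: (f01 h Hh) (g01 h Hh) => /andP[? ?] /andP[? ?].
by rewrite ler_norml; apply/andP; split; lra.
Qed.

Lemma emp_discrepancy_le_emp_Hdiv (R : realType) (X : Type) (N : nat)
  (H : set (X -> bool)) (ts ss : 'I_N -> X) (h0 : X -> bool) :
  (0 < N)%N -> H h0 ->
  2 * `|emp_prob ts h0 - emp_prob ss h0 : R| <= emp_Hdiv ts ss H.
Proof.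
move=> N_gt0 Hh0; rewrite /emp_Hdiv ler_pM2l //.
apply: sup_upper_bound; last by exists h0.
by apply: has_sup_dist01 => [|h _|h _]; [exists h0|exact: emp_prob_ge0_le1..].
Qed.

Lemma Hdiv_approx_witness {R : realType} {d : measure_display}
  {X : measurableType d} {H : set (X -> bool)} (PT PS : probability X R) (eta : R) :
  H !=set0 -> (forall h, H h -> measurable (Iset h)) -> 0 < eta ->
  exists2 h0, H h0 &
    Hdiv PT PS H <= 2 * (`|fine (PT (Iset h0)) - fine (PS (Iset h0))| + eta).
Proof.
move=> H_neq0 mH eta_gt0.
have : has_sup [set `|fine (PT (Iset h)) - fine (PS (Iset h))| | h in H].
  by apply: has_sup_dist01 => // h Hh; exact/fine_probability_ge0_le1/mH.
move=> /(sup_adherent eta_gt0) [_ [h0 Hh0 <-] lt_h0].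
by exists h0 => //; rewrite /Hdiv ler_pM2l //; lra.
Qed.

Theorem lemma7 (R : realType) (r K : nat) (dX dO : measure_display)
  (X : measurableType dX) (Omega : measurableType dO)
  (hp : 'rV[R]_r -> X -> bool)
  (Theta : 'I_K -> set 'rV[R]_r) (dims : 'I_K -> nat) (dTheta : nat)
  (PT PS : probability X R) (N : nat)
  (P : probability Omega R) (Ts Ss : 'I_N -> Omega -> X) (delta : R) :
  (1 < K)%N ->
  (0 < N)%N ->
  (forall th, (\bigcup_(i in [set: 'I_K]) Theta i) th ->
     measurable (Iset (hp th))) ->
  (forall i, is_VCdim (hclass hp (Theta i)) (dims i)) ->
  is_VCdim (hclass hp (\bigcup_(i in [set: 'I_K]) Theta i)) dTheta ->
  iid_samples P Ts Ss PT PS ->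
  0 < delta < 1 ->
  exists2 E : set Omega, measurable E &
    E `<=` [set w | Hdiv PT PS (hclass hp (\bigcup_(i in [set: 'I_K]) Theta i))
                    <= emp_Hdiv (fun j => Ts j w) (fun j => Ss j w)
                         (hclass hp (\bigcup_(i in [set: 'I_K]) Theta i))
                       + \big[Num.max/0]_(i < K)
                           (4 * Num.sqrt (((dims i)%:R * ln (2 * N%:R)
                                           + ln (2 * K%:R / delta))
                                          / (2 * N%:R)))]
    /\ ((1 - delta)%:E <= P E)%E.
Proof.
move=> K_gt1 N_gt0 mTheta _ /is_VCdim_neq0 H_neq0 iid /andP[delta_gt0 delta_lt1].
set H := hclass hp _; set M := \big[Num.max/0]_(i < K) _.
have mH h : H h -> measurable (Iset h) by case=> th Uth <-; exact: mTheta.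
set a := hoeffding_radius N delta.
have aM : 2 * a < M.
  by apply: hoeffding_radius_lt_bound; rewrite ?delta_gt0 // (ltn_trans _ K_gt1).
have [|h0 Hh0 Hdiv_le] := Hdiv_approx_witness PT PS (M / 2 - a) H_neq0 mH; first lra.
have [E mE [E_sub PE]] := emp_discrepancy_concentration iid (mH h0 Hh0) a N_gt0
                             (hoeffding_radius_ge0 N delta).
have delta_le1 : 0 < delta <= 1 by rewrite delta_gt0 ltW.
exists E => //; split; last by rewrite expR_hoeffding_radius in PE.
move=> w /E_sub /= close /=.
have emp_le : 2 * `|emp_prob (Ts^~ w) h0 - emp_prob (Ss^~ w) h0 : R| <=
              emp_Hdiv (Ts^~ w) (Ss^~ w) H by exact: emp_discrepancy_le_emp_Hdiv.
lra.
Qed.
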